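(* Let $n,k$ be positive integers with $n\ge 2(k+1)$, let $G=W_n^k$ be the web graph, and let $C\subseteq V(G)$ (possibly empty). Let $m_1=n-\delta_1+1$ where $\delta_1=\min_{v\in V}|N\langle v\rangle|$ (so $m_1=n-2k$ if $C=V$ and $m_1=n-2k+1$ if $C\ne V$). Then $\gamma_{\rm gr}(G;C)=m_1$ if (i) $C=V$, or (ii) there is $i\in V\setminus C$ such that $V\setminus N[i]$ induces a path $P_t$ with $t=n-2k-1$ and $C$ is a good configuration for this path. Otherwise $\gamma_{\rm gr}(G;C)=m_1-1$.
   Context: The web $W_n^k$ has vertex set $V=\{0,\dots,n-1\}$ and edge set $\{\{i,j\}: 0<|i-j|\le k \text{ or } |i-j|\ge n-k\}$. $N\langle v\rangle = N[v]$ (closed neighborhood) if $v\in C$ and $N\langle v\rangle=N(v)$ (open neighborhood) if $v\notin C$. A sequence $(v_1,\dots,v_s)$ of distinct vertices is legal if $N\langle v_i\rangle\setminus\bigcup_{j<i}N\langle v_j\rangle\neq\emptyset$ for all $i\ge 2$, and dominating if $\bigcup_j N\langle v_j\rangle=V$; $\gamma_{\rm gr}(G;C)$ is the maximum length of a legal dominating sequence. Good configuration (defined for a path with vertices $a_1,\dots,a_s$ in order, applied to $C\cap\{a_1,\dots,a_s\}$; isolated vertices outside $C$ are allowed): $C$ is a good configuration for the path if (i) $s=1$ and $a_1\in C$; or (ii) $s=2$ and $\{a_1,a_2\}\not\subseteq C$; or (iii) $s\ge 3$ and either $a_1\notin C$ and $C$ is a good configuration for $(a_3,\dots,a_s)$,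 or $a_s\notin C$ and $C$ is a good configuration for $(a_1,\dots,a_{s-2})$. *)

From mathcomp Require Import all_boot all_order.
Set Implicit Arguments. Unset Strict Implicit. Unset Printing Implicit Defensive.

Section Web.
Variables n k : nat.
Notation V := 'I_n.

Definition vdist (i j : V) : nat := maxn i j - minn i j.

Definition web_adj (i j : V) : bool :=
  (i != j) && ((vdist i j <= k) || (n - k <= vdist i j)).

Definition Nopen (v : V) : {set V} := [set u | web_adj v u].
Definition Nclosed (v : V) : {set V} := v |: Nopen v.

Definition Nangle (C : {set V}) (v : V) : {set V} :=
  if v \in C then Nclosed v else Nopen v.

Fixpoint legal_from (C : {set V}) (U : {set V}) (s : seq V) : bool :=
  match s with
  | [::] => true
  | x :: s' => (~~ (Nangle C x \subset U)) && legal_from C (U :|: Nangle C x) s'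
  end.

Definition legal (C : {set V}) (s : seq V) : bool :=
  uniq s &&
  match s with
  | [::] => true
  | x :: s' => legal_from C (Nangle C x) s'
  end.

Definition dominating (C : {set V}) (s : seq V) : bool :=
  \bigcup_(x <- s) Nangle C x == [set: V].

(* gamma_gr(W_n^k; C): maximum length of a legal dominating sequence
   (legal sequences have distinct entries, hence length <= n) *)
Definition gamma_gr (C : {set V}) : nat :=
  \max_(m < n.+1 | [exists t : m.-tuple V, legal C t && dominating C t]) m.

Definition delta1 (C : {set V}) : nat := \big[minn/n]_(v : V) #|Nangle C v|.
Definition m1 (C : {set V}) : nat := n - delta1 C + 1.

Definition induces_path_seq (p : seq V) : Prop :=
  uniq p /\
  forall x y, x \in p -> y \in p ->
    web_adj x y = ((index x p).+1 == index y p) || ((index y p).+1 == index x p).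

Inductive good (C : {set V}) : seq V -> Prop :=
| good_one a : a \in C -> good C [:: a]
| good_two a b : ~~ ((a \in C) && (b \in C)) -> good C [:: a; b]
| good_left a b s : a \notin C -> good C s -> good C [:: a, b & s]
| good_right s a b : b \notin C -> good C s -> good C (s ++ [:: a; b]).

End Web.

Arguments vdist n : clear implicits.
Arguments web_adj n k : clear implicits.
Arguments Nopen n k : clear implicits.
Arguments Nclosed n k : clear implicits.
Arguments Nangle n k : clear implicits.
Arguments legal n k : clear implicits.
Arguments dominating n k : clear implicits.
Arguments gamma_gr n k : clear implicits.
Arguments delta1 n k : clear implicits.
Arguments m1 n k : clear implicits.
Arguments induces_path_seq n k : clear implicits.
Arguments good n : clear implicits.

(* Every vertex of W_n^k has exactly 2k neighbours.  The first vertex x of a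
   legal sequence footprints |N<x>| >= delta_1 vertices and each later one at
   least one more, so gamma_gr <= m_1; playing 0, 1, ..., n-2k-1 and extending
   greedily gives gamma_gr >= n - 2k, which settles the case C = V.

   For C <> V, gamma_gr = m_1 = n - 2k + 1 means that some legal sequence
   x, x_1, ..., x_{n-2k} is tight: x is not in C, and each x_j footprints exactly
   one of the n - 2k still unfootprinted vertices, namely x itself and the
   vertices of P = V \ N[x].  A good configuration is precisely a recipe for
   peeling P from its ends in this way (a vertex outside C footprints its path
   neighbour and is footprinted back by it, a vertex of C footprints itself); a
   final neighbour of x footprints x.  Conversely, a tight sequence can only peel
   P from its ends, which forces C to be a good configuration of P; when
   k >= 2 and |P| >= 3, P does not even induce a path and already the second
   vertex would footprint two vertices.  Rotations are automorphisms of the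
   web, so the converse need only be checked for x = 0. *)

From mathcomp Require Import all_boot all_order zify.
Set Implicit Arguments. Unset Strict Implicit. Unset Printing Implicit Defensive.

Section Footprints.
Variables n k : nat.
Implicit Types (C U : {set 'I_n}) (x y z : 'I_n) (w : seq 'I_n).

Lemma web_adjE x y : web_adj n k x y =
  (x != y :> nat) && ((maxn x y - minn x y <= k) || (n - k <= maxn x y - minn x y)).
Proof. by rewrite /web_adj /vdist -val_eqE. Qed.

Lemma web_adj_sym x y : web_adj n k x y = web_adj n k y x.
Proof. by rewrite /web_adj /vdist eq_sym maxnC minnC. Qed.

Lemma web_adj_irr x : web_adj n k x x = false.
Proof. by rewrite /web_adj eqxx. Qed.

Lemma web_adj_neq x y : web_adj n k x y -> x != y.
Proof. by case/andP. Qed.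

Lemma in_Nopen x y : (y \in Nopen n k x) = web_adj n k x y.
Proof. by rewrite inE. Qed.

Lemma in_Nangle C x y :
  (y \in Nangle n k C x) = (x \in C) && (y == x) || web_adj n k x y.
Proof. by rewrite /Nangle /Nclosed; case: (x \in C); rewrite !inE. Qed.

Lemma Nangle_notin C x : x \notin C -> Nangle n k C x = Nopen n k x.
Proof. by rewrite /Nangle => /negbTE ->. Qed.

Lemma adj_in_Nangle C x y : web_adj n k x y -> y \in Nangle n k C x.
Proof. by rewrite in_Nangle => ->; rewrite orbT. Qed.

Definition covered C U w := U :|: \bigcup_(y <- w) Nangle n k C y.

Lemma covered_cons C U x w :
  covered C U (x :: w) = covered C (U :|: Nangle n k C x) w.
Proof. by rewrite /covered big_cons setUA. Qed.

Lemma in_covered C U w z :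
  (z \in covered C U w) = (z \in U) || has (fun y => z \in Nangle n k C y) w.
Proof.
elim: w U => [|x w IH] U; first by rewrite /covered big_nil setU0 orbF.
by rewrite covered_cons IH inE /= orbA.
Qed.

Lemma legal_from_cat C U w1 w2 :
  legal_from k C U (w1 ++ w2) =
  legal_from k C U w1 && legal_from k C (covered C U w1) w2.
Proof.
elim: w1 U => [|x w1 IH] U /=; first by rewrite /covered big_nil setU0.
by rewrite IH covered_cons andbA.
Qed.

Lemma legal_from_card C U w :
  legal_from k C U w -> #|U| + size w <= #|covered C U w|.
Proof.
elim: w U => [|x w IH] U /=; first by rewrite /covered big_nil setU0 addn0.
case/andP => newx /IH; rewrite covered_cons addnS; apply: leq_trans.
by rewrite ltn_add2r proper_card // setUC properUr.
Qed.

Lemma legal_from_size C U w : legal_from k C U w -> #|U| + size w <= n.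
Proof.
move/legal_from_card/leq_trans; apply.
by rewrite -[n in _ <= n]card_ord max_card.
Qed.

Lemma legal_size C x w : legal n k C (x :: w) -> #|Nangle n k C x| + size w <= n.
Proof. by case/andP=> _; apply: legal_from_size. Qed.

(* Combined with legal_from_size, the bound forces every vertex of w to
   footprint exactly one new vertex. *)
Definition tight C U w := legal_from k C U w && (n <= #|U| + size w).

Lemma tight_new C U x w y z : tight C U (x :: w) ->
  y \in Nangle n k C x -> z \in Nangle n k C x -> y \notin U -> z \notin U ->
  y = z.
Proof.
case/andP=> /andP[_ legal_w] full yN zN yU zU; apply/eqP/contraT => neq_yz.
have le_card : #|y |: (z |: U)| <= #|U :|: Nangle n k C x|.
  apply/subset_leq_card/subsetP => v; rewrite !inE.
  by case/or3P=> [/eqP->|/eqP->|->]; rewrite ?yN ?zN ?orbT.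
move: le_card (legal_from_size legal_w) full.
rewrite !cardsU1 !inE negb_or neq_yz yU zU /=.
set u := #|U|; set v := #|U :|: _|; lia.
Qed.

Lemma tight_two_free C U x w y z : tight C U (x :: w) -> y != z ->
  web_adj n k x y -> web_adj n k x z -> y \notin U -> z \notin U -> False.
Proof.
move=> tight_xw neq_yz xy xz yU zU.
by move/eqP: neq_yz; apply; apply: tight_new tight_xw _ _ yU zU; apply: adj_in_Nangle.
Qed.

Lemma tight_cons C U x w z : tight C U (x :: w) ->
  z \in Nangle n k C x -> z \notin U ->
  U :|: Nangle n k C x = z |: U /\ tight C (z |: U) w.
Proof.
move=> tight_xw zN zU; have /andP[/= /andP[_ legal_w] full] := tight_xw.
have UxE : U :|: Nangle n k C x = z |: U.
  apply/setP => y; rewrite !inE; case yU: (y \in U); rewrite ?orbT //= orbF.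
  apply/idP/eqP => [yN|->//]; exact: tight_new tight_xw yN zN (negbT yU) zU.
split => //; rewrite /tight -UxE legal_w /= UxE cardsU1 zU.
by move: full => /=; lia.
Qed.

Lemma tight_nil C U : tight C U [::] -> U = [set: 'I_n].
Proof.
case/andP=> _; rewrite addn0 => full.
by apply/eqP; rewrite eqEcard subsetT cardsT card_ord.
Qed.

Lemma gamma_gr_le C b :
  (forall s, legal n k C s -> size s <= b) -> gamma_gr n k C <= b.
Proof.
move=> le_b; apply/bigmax_leqP => m /existsP[s /andP[legal_s _]].
by rewrite -(size_tuple s) le_b.
Qed.

Lemma leq_gamma_gr C s :
  legal n k C s -> dominating n k C s -> size s <= gamma_gr n k C.
Proof.
move=> legal_s dom_s; have /andP[uniq_s _] := legal_s.
have lt_s : size s < n.+1.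
  by rewrite ltnS -(card_uniqP uniq_s) -[n in _ <= n]card_ord max_card.
apply: leq_trans (leq_bigmax_cond (Ordinal lt_s) _) => //.
by apply/existsP; exists (in_tuple s); rewrite legal_s dom_s.
Qed.

End Footprints.

Arguments covered n k : clear implicits.
Arguments tight n k : clear implicits.

Section PathCover.
Variables (n k : nat) (C : {set 'I_n}).
Implicit Types (U : {set 'I_n}) (a b x y : 'I_n) (s w : seq 'I_n).

Lemma induces_path_consl a b s : induces_path_seq n k [:: a, b & s] ->
  [/\ induces_path_seq n k s, web_adj n k a b, a \notin s, b \notin s
    & forall y, y \in s -> ~~ web_adj n k a y].
Proof.
case=> uniq_abs adjE; have /and3P[/norP[neq_ab a_s] b_s uniq_s] := uniq_abs.
have idxE y : y \in s -> index y [:: a, b & s] = (index y s).+2.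
  by move=> y_s /=; rewrite !ifN_eqC ?(memPn a_s) ?(memPn b_s).
split => // [||y y_s].
- by split => // x y x_s y_s; rewrite adjE ?inE ?x_s ?y_s ?orbT // !idxE.
- by rewrite adjE ?inE ?eqxx ?orbT //= eqxx (negbTE neq_ab) eqxx.
- by rewrite adjE ?inE ?eqxx ?y_s ?orbT // (idxE y) //= eqxx.
Qed.

Lemma induces_path_rcons2 s a b : induces_path_seq n k (s ++ [:: a; b]) ->
  [/\ induces_path_seq n k s, web_adj n k b a, a \notin s, b \notin s
    & forall y, y \in s -> ~~ web_adj n k b y].
Proof.
case=> uniq_sab adjE; have := uniq_sab.
rewrite cat_uniq /= !inE !negb_or andbT => /and3P[uniq_s /and3P[a_s b_s _] neq_ab].
have idxE y : y \in s -> index y (s ++ [:: a; b]) = index y s.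
  by move=> y_s; rewrite index_cat y_s.
have idx_b : index b (s ++ [:: a; b]) = (size s).+1.
  by rewrite index_cat (negbTE b_s) /= (negbTE neq_ab) eqxx addn1.
have idx_a : index a (s ++ [:: a; b]) = size s.
  by rewrite index_cat (negbTE a_s) /= eqxx addn0.
split => // [||y y_s].
- by split => // x y x_s y_s; rewrite adjE ?mem_cat ?x_s ?y_s // !idxE.
- by rewrite adjE ?mem_cat ?inE ?eqxx ?orbT // idx_a idx_b eqxx orbT.
- rewrite adjE ?mem_cat ?y_s ?inE ?eqxx ?orbT // idx_b idxE //.
  by move: y_s; rewrite -index_mem; set j := index y s; set m := size s; lia.
Qed.

Definition legal_cover U q := exists w,
  [/\ legal_from k C U w, perm_eq w q & {subset q <= covered n k C U w}].

Lemma legal_cover_perm U q1 q2 :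
  perm_eq q1 q2 -> legal_cover U q1 -> legal_cover U q2.
Proof.
move=> q12 [w [legal_w wq1 cover_q1]]; exists w; split => //.
  exact: perm_trans q12.
by move=> x; rewrite -(perm_mem q12); apply: cover_q1.
Qed.

Lemma legal_cover_wrap U a b s : a \notin C -> web_adj n k a b ->
  a \notin U -> b \notin U -> a \notin s ->
  (forall y, y \in s -> ~~ web_adj n k a y) ->
  legal_cover (U :|: Nangle n k C a) s -> legal_cover U [:: a, b & s].
Proof.
move=> aC ab aU bU a_s a_nadj [w [legal_w ws cover_s]].
have b_Na : b \in Nangle n k C a by rewrite adj_in_Nangle.
have a_Nb : a \in Nangle n k C b by rewrite adj_in_Nangle // web_adj_sym.
have a_free : a \notin covered n k C (U :|: Nangle n k C a) w.
  rewrite in_covered inE !negb_or aU Nangle_notin // in_Nopen web_adj_irr /=.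
  apply/hasPn => y; rewrite (perm_mem ws) => y_s.
  rewrite in_Nangle negb_or web_adj_sym a_nadj // andbT.
  by apply: contraNN a_s => /andP[_ /eqP->].
exists (a :: w ++ [:: b]); split.
- rewrite /= legal_from_cat legal_w /= andbT; apply/andP; split; apply/subsetPn.
    by exists b.
  by exists a.
- by rewrite perm_cons (perm_catC w [:: b]) /= perm_cons.
- move=> x; rewrite !in_cons => /or3P[/eqP->|/eqP->|x_s].
  + by rewrite in_covered /= has_cat /= a_Nb !orbT.
  + by rewrite in_covered /= b_Na orbT.
  + by rewrite covered_cons in_covered has_cat orbA -in_covered cover_s.
Qed.

Lemma good_legal_cover q : good n C q -> induces_path_seq n k q ->
  forall U, (forall x, x \in q -> x \notin U) -> legal_cover U q.
Proof.
elim=> {q} [a aC | a b not_ab | a b s aC _ IH | s a b bC _ IH] q_path U q_U.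
- exists [:: a]; split => // [|x]; last first.
    by rewrite inE => /eqP->; rewrite in_covered /= in_Nangle aC eqxx orbT.
  by rewrite /= andbT; apply/subsetPn; exists a; rewrite ?in_Nangle ?aC ?eqxx ?q_U ?inE.
- have [_ ab _ _ _] := induces_path_consl (s := [::]) q_path.
  have [aU bU] : a \notin U /\ b \notin U by split; apply: q_U; rewrite !inE eqxx ?orbT.
  have empty V : legal_cover V [::] by exists [::].
  case aC: (a \in C); last by apply: legal_cover_wrap; rewrite ?aC.
  apply: (legal_cover_perm (q1 := [:: b; a])); first by apply/permP => P /=; lia.
  by apply: legal_cover_wrap; rewrite 1?web_adj_sym; move: not_ab; rewrite ?aC.
- have [s_path ab a_s b_s a_nadj] := induces_path_consl q_path.
  apply: legal_cover_wrap => //; try by apply: q_U; rewrite !inE eqxx ?orbT.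
  apply: IH => // x x_s; rewrite inE negb_or Nangle_notin // in_Nopen a_nadj //.
  by rewrite q_U // !inE x_s !orbT.
- have [s_path ba a_s b_s b_nadj] := induces_path_rcons2 q_path.
  apply: (legal_cover_perm (q1 := [:: b, a & s])).
    by apply/permP => P; rewrite /= count_cat /=; lia.
  apply: legal_cover_wrap => //; try by apply: q_U; rewrite mem_cat !inE eqxx ?orbT.
  apply: IH => // x x_s; rewrite inE negb_or Nangle_notin // in_Nopen b_nadj //.
  by rewrite q_U // mem_cat x_s.
Qed.

End PathCover.

Arguments legal_cover n k : clear implicits.

Section TightCore.
Variables (n k : nat) (C : {set 'I_n}) (i : 'I_n) (p : seq 'I_n).
Hypothesis mem_p : forall x, (x \in p) = (x \notin Nclosed n k i).
Hypothesis p_path : induces_path_seq n k p.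
Hypothesis Nopen_ends : forall x, x \in Nopen n k i ->
  web_adj n k x (nth i p 0) || web_adj n k x (nth i p (size p).-1).

Local Notation a := (nth i p).
Local Notation s := (size p).
Implicit Types (U : {set 'I_n}) (x y : 'I_n) (w used : seq 'I_n).

Lemma path_adj j l : j < s -> l < s ->
  web_adj n k (a j) (a l) = (j.+1 == l) || (l.+1 == j).
Proof.
by case: p_path => uniq_p adjE jlt llt; rewrite adjE ?mem_nth // !index_uniq.
Qed.

Lemma path_eq j l : j < s -> l < s -> (a j == a l) = (j == l).
Proof. by case: p_path => uniq_p _ jlt llt; rewrite nth_uniq. Qed.

Lemma mem_path_setU1 U j l : j < s -> l < s ->
  (a j \in a l |: U) = (j == l) || (a j \in U).
Proof. by move=> jlt llt; rewrite in_setU1 path_eq. Qed.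

Lemma path_center j : j < s -> (a j != i) && ~~ web_adj n k i (a j).
Proof. by move/(mem_nth i); rewrite mem_p in_setU1 negb_or in_Nopen. Qed.

Lemma center_notin_Nangle j : j < s -> i \notin Nangle n k C (a j).
Proof.
move/path_center/andP=> [neq_i nadj].
by rewrite in_Nangle negb_or web_adj_sym nadj eq_sym (negbTE neq_i) andbF.
Qed.

Lemma path_nbr j y : j < s -> web_adj n k (a j) y ->
  y \in Nopen n k i \/ exists2 l, l < s & y = a l /\ (j.+1 == l) || (l.+1 == j).
Proof.
move=> jlt ajy; case y_p: (y \in p).
  right; exists (index y p); first by rewrite index_mem.
  by rewrite nth_index // -path_adj ?index_mem ?nth_index.
move/negbT: y_p; rewrite mem_p negbK in_setU1 => /orP[/eqP yi|]; last by left.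
move: ajy; rewrite yi web_adj_sym => adj_ia.
by have /andP[_] := path_center jlt; rewrite adj_ia.
Qed.

(* The path a_0, ..., a_(s-1) is peeled from both ends: a_L, ..., a_(R-1) are
   not footprinted yet, and every other path vertex has either been played or
   would footprint two new vertices. *)
Record tight_state L R U used : Prop := TightState {
  core_lt : L < R;
  core_le : R <= s;
  core_free : forall j, L <= j < R -> a j \notin U;
  side_blocked : forall j, j < s -> ~~ (L <= j < R) ->
    (a j \in used) || [&& 0 < j < s.-1, a j.-1 \notin U & a j.+1 \notin U];
  head_free : a 0 \notin U;
  last_free : a s.-1 \notin U;
  left_covered : 0 < L -> a L.-1 \in U;
  right_covered : R < s -> a R \in U;
  center_free : i \notin U;
  center_used : i \in used;
  Nopen_covered : Nopen n k i \subset U }.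

Lemma tight_state_shiftl L R U used : tight_state L R U used -> L.+2 < R ->
  tight_state L.+2 R (a L.+1 |: U) (rcons used (a L)).
Proof.
case=> lt_LR le_s core side head last left right iU i_used NiU lt_L2R.
have memU j : j < s -> (a j \in a L.+1 |: U) = (j == L.+1) || (a j \in U).
  by move=> jlt; rewrite mem_path_setU1 //; lia.
have Ls : L.+2 < s by lia.
split => //.
- by move=> j jR; rewrite memU ?negb_or ?core; lia.
- move=> j jlt jR; rewrite mem_rcons in_cons path_eq //; last lia.
  have [->|neq_jL] := eqVneq j L; first by [].
  have [->|neq_jL1] := eqVneq j L.+1.
    by apply/orP; right; rewrite !memU ?negb_or ?core //=; lia.
  have {jR neq_jL neq_jL1} j_old : ~~ (L <= j < R) by lia.
  have /orP[->//|/and3P[j_range prev_free next_free]] := side j jlt j_old.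
  have jp : j.+1 < s by rewrite -ltn_predRL; case/andP: j_range.
  have jm : j.-1 < s := leq_ltn_trans (leq_pred j) jlt.
  rewrite !memU // j_range (negbTE prev_free) (negbTE next_free) !orbF /=.
  apply/orP; right; apply/andP; split; apply: contraNneq j_old => eq_j;
    clear -eq_j lt_L2R; lia.
- by rewrite memU ?negb_or ?head; lia.
- by rewrite memU ?negb_or ?last; lia.
- by move=> _ /=; rewrite setU11.
- by move=> lt_s; rewrite memU ?right ?orbT.
- by rewrite in_setU1 negb_or iU eq_sym (andP (path_center _)).1; lia.
- by rewrite mem_rcons in_cons i_used orbT.
- exact: subset_trans NiU (subsetUr _ _).
Qed.

Lemma tight_state_shiftr L R U used : tight_state L R.+2 U used -> L < R ->
  tight_state L R (a R |: U) (rcons used (a R.+1)).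
Proof.
case=> lt_LR le_s core side head last left right iU i_used NiU lt_L2R.
have memU j : j < s -> (a j \in a R |: U) = (j == R) || (a j \in U).
  by move=> jlt; rewrite mem_path_setU1 //; lia.
split => //.
- lia.
- by move=> j jR; rewrite memU ?negb_or ?core; lia.
- move=> j jlt jR; rewrite mem_rcons in_cons path_eq //.
  have [->|neq_jR] := eqVneq j R.+1; first by [].
  have [->|neq_jR1] := eqVneq j R.
    by apply/orP; right; rewrite !memU ?negb_or ?core //=; lia.
  have {jR neq_jR neq_jR1} j_old : ~~ (L <= j < R.+2) by lia.
  have /orP[->//|/and3P[j_range prev_free next_free]] := side j jlt j_old.
  have jp : j.+1 < s by rewrite -ltn_predRL; case/andP: j_range.
  have jm : j.-1 < s := leq_ltn_trans (leq_pred j) jlt.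
  rewrite !memU // j_range (negbTE prev_free) (negbTE next_free) !orbF /=.
  apply/orP; right; apply/andP; split; apply: contraNneq j_old => eq_j;
    clear -eq_j lt_L2R; lia.
- by rewrite memU ?negb_or ?head; lia.
- by rewrite memU ?negb_or ?last; lia.
- by move=> L_gt0; rewrite in_setU1 left ?orbT.
- by move=> _; rewrite setU11.
- by rewrite in_setU1 negb_or iU eq_sym (andP (path_center _)).1; lia.
- by rewrite mem_rcons in_cons i_used orbT.
- exact: subset_trans NiU (subsetUr _ _).
Qed.

Lemma tight_interior U j w : tight n k C U (a j :: w) -> 0 < j < s.-1 ->
  a j.-1 \notin U -> a j.+1 \notin U -> False.
Proof.
move=> tight_jw j_range prev_free next_free.
apply: (tight_two_free tight_jw _ _ _ prev_free next_free);
  by rewrite ?path_eq ?path_adj; lia.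
Qed.

Lemma tight_state_play_in_path L R U used x w :
  tight_state L R U used -> tight n k C U (x :: w) -> x \notin used ->
  exists2 j, j < s & x = a j.
Proof.
move=> st tight_xw x_used; case x_p: (x \in p).
  by exists (index x p); rewrite ?index_mem ?nth_index.
exfalso; move/negbT: x_p; rewrite mem_p negbK in_setU1 => /orP[/eqP xi|x_Ni].
  by move: x_used; rewrite xi (center_used st).
have [e [e_lt adj_e e_free]] : exists e, [/\ e < s, web_adj n k x (a e) & a e \notin U].
  have s_gt0 : 0 < s by have := core_le st; have := core_lt st; lia.
  case/orP: (Nopen_ends x_Ni) => adj_e; [exists 0 | exists s.-1];
    split; rewrite ?(head_free st) ?(last_free st) //; lia.
have i_Nx : i \in Nangle n k C x by rewrite adj_in_Nangle // web_adj_sym -in_Nopen.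
have := tight_new tight_xw i_Nx (adj_in_Nangle C adj_e) (center_free st) e_free.
by move=> ie; have := path_center e_lt; rewrite -ie eqxx.
Qed.

Lemma tight_state_play_core_end L R U used j w :
  tight_state L R U used -> tight n k C U (a j :: w) -> j < s ->
  a j \notin used -> j = L \/ j = R.-1.
Proof.
move=> st tight_jw jlt j_used.
have [->|jL] := eqVneq j L; first by left.
have [->|jR] := eqVneq j R.-1; first by right.
exfalso; have lt_LR := core_lt st; have le_s := core_le st.
have [j_core|j_side] := boolP (L <= j < R).
  by apply: tight_interior tight_jw _ (core_free st _) (core_free st _); lia.
have /orP[j_used'|/and3P[j_range prev_free next_free]] := side_blocked st jlt j_side.
  by rewrite j_used' in j_used.
exact: tight_interior tight_jw j_range prev_free next_free.
Qed.

Lemma tight_state_single L U used w :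
  tight_state L L.+1 U used -> tight n k C U (a L :: w) -> a L \in C.
Proof.
move=> st /andP[/= /andP[not_sub _] _]; apply: contraR not_sub => aC.
have Llt : L < s := core_le st.
apply/subsetP => y; rewrite Nangle_notin // in_Nopen => /(path_nbr Llt).
case=> [y_Ni|[l llt [-> /orP[/eqP Ll|/eqP lL]]]].
- exact: subsetP (Nopen_covered st) y y_Ni.
- by move: llt; rewrite -Ll => /(right_covered st).
- by rewrite (_ : l = L.-1) ?(left_covered st); lia.
Qed.

Lemma tight_state_left_end L R U used w :
  tight_state L R U used -> L.+1 < R -> tight n k C U (a L :: w) ->
  a L \notin C /\ tight n k C (a L.+1 |: U) w.
Proof.
move=> st lt_L1R tight_Lw; have le_s := core_le st.
have next_N : a L.+1 \in Nangle n k C (a L).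
  by rewrite adj_in_Nangle // path_adj ?eqxx //; lia.
have next_free : a L.+1 \notin U by rewrite (core_free st) //; lia.
split; last by have [] := tight_cons tight_Lw next_N next_free.
apply/negP => aC; have self_N : a L \in Nangle n k C (a L) by rewrite in_Nangle aC eqxx.
have := tight_new tight_Lw self_N next_N (core_free st _) next_free.
by move=> /(_ _)/eqP; rewrite path_eq; lia.
Qed.

Lemma tight_state_right_end L R U used w :
  tight_state L R.+2 U used -> L <= R -> tight n k C U (a R.+1 :: w) ->
  a R.+1 \notin C /\ tight n k C (a R |: U) w.
Proof.
move=> st le_LR tight_Rw; have le_s := core_le st.
have prev_N : a R \in Nangle n k C (a R.+1).
  by rewrite adj_in_Nangle // path_adj ?eqxx ?orbT //; lia.
have prev_free : a R \notin U by rewrite (core_free st) //; lia.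
split; last by have [] := tight_cons tight_Rw prev_N prev_free.
apply/negP => aC.
have self_N : a R.+1 \in Nangle n k C (a R.+1) by rewrite in_Nangle aC eqxx.
have := tight_new tight_Rw self_N prev_N (core_free st _) prev_free.
by move=> /(_ _)/eqP; rewrite path_eq; lia.
Qed.

Lemma tight_state_good L R U used w :
  tight_state L R U used -> tight n k C U w -> uniq (used ++ w) ->
  good n C (map a (iota L (R - L))).
Proof.
have [m] := ubnP (R - L); elim: m => // m IH in L R U used w *; rewrite ltnS => le_m.
move=> st tight_w uniq_w; have lt_LR := core_lt st.
case: w tight_w uniq_w => [/tight_nil UT|x w tight_xw uniq_xw].
  by have := center_free st; rewrite UT inE.
have x_used : x \notin used.
  by move: uniq_xw; rewrite cat_uniq /= negb_or => /and3P[_ /andP[]].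
have [j jlt xE] := tight_state_play_in_path st tight_xw x_used; subst x.
have uniq_w : uniq (rcons used (a j) ++ w) by rewrite cat_rcons.
have [R1|lt_L1R] := eqVneq R L.+1.
  have jL : j = L by have := tight_state_play_core_end st tight_xw jlt x_used; lia.
  subst R j; rewrite subSnn; apply: good_one; exact: tight_state_single st tight_xw.
have {}lt_L1R : L.+1 < R by lia.
case: (tight_state_play_core_end st tight_xw jlt x_used) => [jL|jR]; subst j.
- have [aC tight_w] := tight_state_left_end st lt_L1R tight_xw.
  have -> : R - L = (R - L.+2).+2 by lia.
  have [R2|lt_L2R] := eqVneq R L.+2.
    by rewrite R2 subnn; apply: good_two; rewrite (negbTE aC).
  apply: good_left aC _.
  by apply: (IH _ _ _ _ _ _ (tight_state_shiftl st _) tight_w uniq_w); lia.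
- have [r RE] : exists r, R = r.+2 by exists R.-2; lia.
  subst R; have le_Lr : L <= r by lia.
  have [aC tight_w] := tight_state_right_end st le_Lr tight_xw.
  have -> : iota L (r.+2 - L) = iota L (r - L) ++ [:: r; r.+1].
    by rewrite -addn2 -addnBAC // iotaD subnKC // addn2.
  have [rL|lt_Lr] := eqVneq r L.
    by subst r; rewrite subnn /=; apply: good_two; rewrite (negbTE aC) andbF.
  rewrite map_cat; apply: good_right aC _.
  by apply: (IH _ _ _ _ _ _ (tight_state_shiftr st _) tight_w uniq_w); lia.
Qed.

End TightCore.

Arguments tight_state n k : clear implicits.

Section Automorphism.
Variables (n k : nat) (f g : 'I_n -> 'I_n).
Hypotheses (fK : cancel f g) (gK : cancel g f).
Hypothesis web_adj_f : forall x y, web_adj n k (f x) (f y) = web_adj n k x y.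
Implicit Types (A B C U : {set 'I_n}) (x y : 'I_n) (q w : seq 'I_n).

Lemma mem_imset_can A y : (y \in f @: A) = (g y \in A).
Proof. by rewrite (can2_imset_pre _ fK gK) inE. Qed.

Lemma imset_canK A : g @: (f @: A) = A.
Proof. by rewrite -imset_comp (eq_imset _ fK) imset_id. Qed.

Lemma subset_imset_can A B : (f @: A \subset f @: B) = (A \subset B).
Proof.
by apply/idP/idP => [/(imsetS g)|/(imsetS f)//]; rewrite !imset_canK.
Qed.

Lemma Nopen_imset x : Nopen n k (f x) = f @: Nopen n k x.
Proof. by apply/setP => y; rewrite mem_imset_can !in_Nopen -(web_adj_f x) gK. Qed.

Lemma Nclosed_imset x : Nclosed n k (f x) = f @: Nclosed n k x.
Proof. by rewrite /Nclosed imsetU imset_set1 Nopen_imset. Qed.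

Lemma Nangle_imset C x : Nangle n k (f @: C) (f x) = f @: Nangle n k C x.
Proof.
by rewrite /Nangle (mem_imset _ _ (can_inj fK)) Nclosed_imset Nopen_imset; case: (x \in C).
Qed.

Lemma legal_imset C s : legal n k (f @: C) (map f s) = legal n k C s.
Proof.
have legal_from_imset U w :
    legal_from k (f @: C) (f @: U) (map f w) = legal_from k C U w.
  elim: w U => [|x w IH] U //=.
  by rewrite Nangle_imset subset_imset_can -imsetU IH.
rewrite /legal (map_inj_uniq (can_inj fK)); case: s => //= x w.
by rewrite Nangle_imset legal_from_imset.
Qed.

Lemma good_imset C q : good n C q -> good n (f @: C) (map f q).
Proof.
have memf A x : (f x \in f @: A) = (x \in A) by rewrite mem_imset_can fK.
elim=> {q} [a aC | a b ab | a b q aC _ IH | q a b bC _ IH].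
- by apply: good_one; rewrite memf.
- by apply: good_two; rewrite !memf.
- by apply: good_left; rewrite ?memf.
- by rewrite map_cat; apply: good_right; rewrite ?memf.
Qed.

Lemma induces_path_map q : induces_path_seq n k q -> induces_path_seq n k (map f q).
Proof.
case=> uniq_q adjE; split; first by rewrite (map_inj_uniq (can_inj fK)).
move=> _ _ /mapP[x x_q ->] /mapP[y y_q ->].
by rewrite web_adj_f adjE // !(index_map (can_inj fK)).
Qed.

Lemma compl_Nclosed_map q x : [set y in q] = ~: Nclosed n k x ->
  [set y in map f q] = ~: Nclosed n k (f x).
Proof.
move=> qE; apply/setP => y; rewrite Nclosed_imset inE in_setC mem_imset_can.
by rewrite -in_setC -qE inE -{1}(gK y) (mem_map (can_inj fK)).
Qed.

End Automorphism.

Lemma bigmin_eq (I : finType) (F : I -> nat) m d x :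
  d <= m -> F x = d -> (forall y, d <= F y) -> \big[minn/m]_y F y = d.
Proof.
move=> le_dm Fx le_dF; apply/eqP; rewrite eqn_leq; apply/andP; split.
  rewrite -Fx; move: (mem_index_enum x); elim: (index_enum I) => // y r IH.
  rewrite inE big_cons => /orP[/eqP<-|/IH]; first exact: geq_minl.
  exact: leq_trans (geq_minr _ _).
by apply: (big_ind (leq d)) => // a b da db; rewrite leq_min da db.
Qed.

Section Web.
Variables n k : nat.
Hypotheses (k_gt0 : 0 < k) (n_ge : 2 * (k + 1) <= n).
Implicit Types (C U : {set 'I_n}) (x y : 'I_n) (s w : seq 'I_n).

Lemma n_gt0 : 0 < n. Proof. lia. Qed.

Definition mod_ord j : 'I_n := Ordinal (ltn_pmod j n_gt0).

Lemma mod_ordE j : j < n -> mod_ord j = j :> nat.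
Proof. exact: modn_small. Qed.

Definition rot r x := mod_ord (x + r).

Lemma rotE r x : r <= n -> rot r x = (if x + r < n then x + r else x + r - n) :> nat.
Proof.
move=> le_rn /=; case: ltnP => [|le_n]; first exact: modn_small.
have xr : x + r = (x + r - n) + n by lia.
by rewrite {1}xr modnDr modn_small //; have := ltn_ord x; lia.
Qed.

Lemma web_adj_rot r x y : r <= n -> web_adj n k (rot r x) (rot r y) = web_adj n k x y.
Proof.
move=> le_rn; have xn := ltn_ord x; have yn := ltn_ord y.
by rewrite !web_adjE !rotE //; case: (ltnP (x + r) n) => ?; case: ltnP; lia.
Qed.

Lemma rotK r : r <= n -> cancel (rot r) (rot (n - r)).
Proof.
move=> le_rn x; apply: ord_inj; have xn := ltn_ord x.
rewrite -[LHS]/(nat_of_ord (rot (n - r) (rot r x))) !rotE ?leq_subr //.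
by case: (ltnP (x + r) n) => ?; case: ltnP; lia.
Qed.

Lemma rotKV r : r <= n -> cancel (rot (n - r)) (rot r).
Proof. by move=> le_rn; rewrite -{2}(subKn le_rn); apply/rotK/leq_subr. Qed.

Local Notation v0 := (mod_ord 0).
Local Notation t := (n - 2 * k - 1).

Lemma rot_v0 x : rot x v0 = x.
Proof. by apply: val_inj; rewrite /= mod0n add0n modn_small. Qed.

Lemma web_adj_v0 y : web_adj n k v0 y = (0 < y) && ((y <= k) || (n - k <= y)).
Proof. by rewrite web_adjE mod_ordE ?n_gt0 //; have := ltn_ord y; lia. Qed.

Definition path0 := map (fun j => mod_ord (k.+1 + j)) (iota 0 t).

Lemma size_path0 : size path0 = t.
Proof. by rewrite size_map size_iota. Qed.

Lemma nth_path0 j : j < t -> nth v0 path0 j = k.+1 + j :> nat.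
Proof. by move=> jt; rewrite (nth_map 0) ?size_iota // nth_iota // mod_ordE; lia. Qed.

Lemma mem_path0 x : (x \in path0) = (k < x < n - k).
Proof.
apply/mapP/idP => [[j j_t ->]|x_range].
  by move: j_t; rewrite mem_iota => j_t; rewrite mod_ordE; lia.
exists (x - k.+1); first by rewrite mem_iota; lia.
by apply: ord_inj; rewrite mod_ordE; lia.
Qed.

Lemma uniq_path0 : uniq path0.
Proof.
rewrite map_inj_in_uniq ?iota_uniq // => i j; rewrite !mem_iota => ilt jlt.
by move/(congr1 (@nat_of_ord n)); rewrite !mod_ordE; lia.
Qed.

Lemma path0E : [set x in path0] = ~: Nclosed n k v0.
Proof.
apply/setP => x; rewrite !inE web_adj_v0 mem_path0 -(inj_eq (@ord_inj n)).
rewrite mod_ordE ?n_gt0 //.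
by have := ltn_ord x; lia.
Qed.

Lemma card_Nopen0 : #|Nopen n k v0| = 2 * k.
Proof.
have card_path0 : #|[set x in path0]| = t.
  by rewrite -size_path0 -(card_uniqP uniq_path0); apply: eq_card => x; rewrite inE.
have := cardsC (Nclosed n k v0); rewrite -path0E card_path0.
by rewrite cardsU1 in_Nopen web_adj_irr card_ord; lia.
Qed.

Lemma card_Nopen x : #|Nopen n k x| = 2 * k.
Proof.
have le_xn : x <= n by apply: ltnW.
rewrite -(rot_v0 x) (Nopen_imset (rotK le_xn) (rotKV le_xn)) ?card_imset ?card_Nopen0 //.
  exact: can_inj (rotK le_xn).
by move=> a b; rewrite web_adj_rot.
Qed.

Lemma card_Nangle C x : #|Nangle n k C x| = (x \in C) + 2 * k.
Proof.
rewrite /Nangle; case: (x \in C); last by rewrite card_Nopen.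
by rewrite cardsU1 in_Nopen web_adj_irr card_Nopen.
Qed.

Lemma delta1E C : delta1 n k C = (C == [set: 'I_n]) + 2 * k.
Proof.
have [->|CT] := eqVneq C [set: 'I_n].
  by apply: (bigmin_eq (x := v0)) => [|//|y]; rewrite ?card_Nangle ?inE //; lia.
have /subsetPn[x _ xC] : ~~ ([set: 'I_n] \subset C).
  by apply: contra CT => TC; rewrite eqEsubset subsetT.
by apply: (bigmin_eq (x := x)) => [|//|y]; rewrite ?card_Nangle ?(negbTE xC) //; lia.
Qed.

Lemma m1_setT : m1 n k [set: 'I_n] = n - 2 * k.
Proof. by rewrite /m1 delta1E eqxx; lia. Qed.

Lemma m1_proper C : C != [set: 'I_n] -> m1 n k C = (n - 2 * k).+1.
Proof. by rewrite /m1 delta1E => /negbTE->; lia. Qed.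

Lemma legal_size_le_m1 C s : legal n k C s -> size s <= m1 n k C.
Proof.
case: s => [|x w] // /legal_size; rewrite card_Nangle /m1 delta1E /=.
by case: eqP => [->|_]; rewrite ?inE; lia.
Qed.

Lemma web_adj_rot1 x : web_adj n k x (rot 1 x).
Proof.
by have xn := ltn_ord x; rewrite web_adjE rotE //; case: (ltnP (x + 1) n) => ?; lia.
Qed.

Lemma legal_rcons C s u : legal n k C s -> s != [::] ->
  u \notin \bigcup_(y <- s) Nangle n k C y -> legal n k C (rcons s (rot 1 u)).
Proof.
have u_cov s' : (u \in \bigcup_(y <- s') Nangle n k C y) =
    has (fun y => u \in Nangle n k C y) s'.
  by rewrite -[RHS]orFb -(in_set0 u) -in_covered inE in_set0.
case: s => [|x w] // /andP[uniq_xw legal_w] _; rewrite u_cov /= negb_or => /andP[u_x u_w].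
have u_N : u \in Nangle n k C (rot 1 u) by rewrite adj_in_Nangle // web_adj_sym web_adj_rot1.
have v_xw : rot 1 u \notin x :: w.
  apply/negP; rewrite in_cons => /orP[/eqP vx|v_w]; first by move: u_x; rewrite -vx u_N.
  by move/hasPn: u_w => /(_ _ v_w); rewrite u_N.
rewrite /legal -rcons_cons rcons_uniq v_xw uniq_xw -cats1 legal_from_cat legal_w /= andbT.
by apply/subsetPn; exists u; rewrite // in_covered negb_or u_x.
Qed.

Lemma legal_extend C s : legal n k C s -> s != [::] ->
  exists2 s', legal n k C s' /\ dominating n k C s' & size s <= size s'.
Proof.
have [m] := ubnP (n - size s); elim: m => // m IH in s *; rewrite ltnS => le_m legal_s s0.
have [dom_s|] := boolP (dominating n k C s); first by exists s.
rewrite /dominating eqEsubset subsetT andTb => /subsetPn[u _ u_s].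
have legal_su := legal_rcons legal_s s0 u_s.
have size_su : size (rcons s (rot 1 u)) <= n.
  by case/andP: legal_su => /card_uniqP <- _; rewrite -[n in _ <= n]card_ord max_card.
have lt_m : n - size (rcons s (rot 1 u)) < m by move: size_su le_m; rewrite size_rcons; lia.
have [|s' s'_ok le_s'] := IH _ lt_m legal_su; first by rewrite -size_eq0 size_rcons.
by exists s'; rewrite // (leq_trans _ le_s') // size_rcons.
Qed.

Lemma leq_gamma_gr_legal C s :
  legal n k C s -> s != [::] -> size s <= gamma_gr n k C.
Proof.
move=> legal_s s0; have [s' [legal_s' dom_s'] le_s] := legal_extend legal_s s0.
exact: leq_trans le_s (leq_gamma_gr legal_s' dom_s').
Qed.

Lemma legal_from_iota C U j c :
  (forall y, y \in U -> (y < j + k) || (n - k <= y)) -> j + c <= n - 2 * k ->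
  legal_from k C U (map mod_ord (iota j c)).
Proof.
elim: c j U => [|c IH] j U U_le //= le_jc; apply/andP; split.
  apply/subsetPn; exists (mod_ord (j + k)).
    by rewrite adj_in_Nangle // web_adjE !mod_ordE; lia.
  by apply/negP => /U_le; rewrite mod_ordE; lia.
apply: IH; last lia.
move=> y; rewrite inE in_Nangle web_adjE mod_ordE; last lia.
case/or3P=> [/U_le|/andP[_ /eqP->]|]; rewrite ?mod_ordE; lia.
Qed.

Lemma legal_iota C : legal n k C (map mod_ord (iota 0 (n - 2 * k))).
Proof.
have -> : n - 2 * k = t.+1 by lia.
have inj : {in iota 0 t.+1 &, injective mod_ord}.
  move=> i j; rewrite !mem_iota => ilt jlt.
  by move/(congr1 (@nat_of_ord n)); rewrite !mod_ordE; lia.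
rewrite /legal map_inj_in_uniq ?iota_uniq //=.
apply: legal_from_iota; last lia.
move=> y; rewrite in_Nangle web_adj_v0 => /orP[/andP[_ /eqP->]|]; rewrite ?mod_ordE; lia.
Qed.

Definition good_config C := exists i, i \notin C /\
  exists p, [set x in p] = ~: Nclosed n k i /\ induces_path_seq n k p /\
    size p = n - 2 * k - 1 /\ good n C p.

Lemma good_config_legal C :
  good_config C -> exists s, legal n k C s /\ size s = (n - 2 * k).+1.
Proof.
move=> [i [iC [p [pE [p_path [size_p good_p]]]]]].
have mem_p x : (x \in p) = (x \notin Nclosed n k i) by rewrite -in_setC -pE inE.
have p_Ni x : x \in p -> (x != i) && ~~ web_adj n k i x.
  by rewrite mem_p in_setU1 negb_or in_Nopen.
have [w [legal_w wp _]] : legal_cover n k C (Nopen n k i) p.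
  apply: good_legal_cover => // x /p_Ni /andP[_]; by rewrite in_Nopen.
set v := rot 1 i; have iv := web_adj_rot1 i.
have i_w : i \notin w by rewrite (perm_mem wp); apply/negP => /p_Ni; rewrite eqxx.
have v_w : v \notin w by rewrite (perm_mem wp); apply/negP => /p_Ni; rewrite iv andbF.
exists (i :: w ++ [:: v]); split; last first.
  by rewrite /= size_cat (perm_size wp) size_p addn1; lia.
rewrite /legal /= mem_cat negb_or i_w inE cat_uniq (perm_uniq wp).
rewrite p_path.1 /= orbF v_w (web_adj_neq iv).
rewrite Nangle_notin // legal_from_cat legal_w /= andbT.
apply/subsetPn; exists i; first by rewrite adj_in_Nangle // web_adj_sym.
rewrite in_covered in_Nopen web_adj_irr /=; apply/hasPn => y.
rewrite (perm_mem wp) => /p_Ni /andP[yi iy].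
by rewrite in_Nangle negb_or eq_sym (negbTE yi) andbF web_adj_sym.
Qed.

Lemma induces_path0 : (k == 1) || (t <= 2) -> induces_path_seq n k path0.
Proof.
move=> k_t; split => [|x y x_p y_p]; first exact: uniq_path0.
have idx z : z \in path0 -> z = k.+1 + index z path0 :> nat /\ index z path0 < t.
  by move=> z_p; rewrite -size_path0 index_mem -nth_path0 ?nth_index // -size_path0 index_mem.
rewrite web_adjE; have [-> ix] := idx x x_p; have [-> iy] := idx y y_p.
by set i := index x path0; set j := index y path0; lia.
Qed.

Lemma Nopen0_ends x : x \in Nopen n k v0 ->
  web_adj n k x (nth v0 path0 0) || web_adj n k x (nth v0 path0 (size path0).-1).
Proof.
have xn := ltn_ord x.
by rewrite in_Nopen web_adj_v0 size_path0 !web_adjE !nth_path0; lia.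
Qed.

Lemma no_tight0 C v w :
  tight n k C (Nopen n k v0) (v :: w) -> v != v0 -> 1 < k -> 2 < t -> False.
Proof.
move=> tight_vw v_v0 k_gt1 t_gt2.
have v_gt0 : 0 < v by move: v_v0; rewrite -(inj_eq (@ord_inj n)) mod_ordE; lia.
have vn := ltn_ord v.
have two_free a b : a < n -> b < n -> a != b ->
    web_adj n k v (mod_ord a) -> web_adj n k v (mod_ord b) ->
    ~~ web_adj n k v0 (mod_ord a) -> ~~ web_adj n k v0 (mod_ord b) -> False.
  move=> an bn neq_ab va vb a_free b_free.
  apply: tight_two_free tight_vw _ va vb _ _; rewrite ?in_Nopen //.
  by rewrite -(inj_eq (@ord_inj n)) !mod_ordE.
have [le_vk|lt_kv] := leqP v k.
  by apply: (two_free 0 k.+1); rewrite ?web_adjE ?web_adj_v0 ?mod_ordE; lia.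
have [le_v|lt_v] := leqP (n - k) v.
  by apply: (two_free 0 (n - k - 1)); rewrite ?web_adjE ?web_adj_v0 ?mod_ordE; lia.
have [le_vk1|lt_k1v] := leqP v k.+1.
  by apply: (two_free k.+2 k.+3); rewrite ?web_adjE ?web_adj_v0 ?mod_ordE; lia.
have [le_v1|lt_v1] := leqP (n - k - 1) v.
  by apply: (two_free (n - k - 2) (n - k - 3)); rewrite ?web_adjE ?web_adj_v0 ?mod_ordE; lia.
by apply: (two_free v.-1 v.+1); rewrite ?web_adjE ?web_adj_v0 ?mod_ordE; lia.
Qed.

Lemma legal_tight0 C w : legal n k C (v0 :: w) -> size w = t.+1 ->
  [/\ v0 \notin C, induces_path_seq n k path0 & good n C path0].
Proof.
move=> legal_w size_w; have /andP[uniq_w legal_from_w] := legal_w.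
have v0C : v0 \notin C.
  by apply/negP => v0C; have := legal_size legal_w; rewrite card_Nangle v0C size_w; lia.
rewrite Nangle_notin // in legal_from_w.
have tight_w : tight n k C (Nopen n k v0) w.
  by rewrite /tight legal_from_w card_Nopen0 size_w; lia.
have path0_ok : induces_path_seq n k path0.
  apply: induces_path0; apply: contraT; rewrite negb_or -ltnNge => /andP[k1 t2].
  case: w size_w uniq_w tight_w {legal_w legal_from_w} => [//|v w] _ /=.
  rewrite in_cons negb_or eq_sym => /andP[/andP[v_v0 _] _] tight_w.
  by exfalso; apply: (no_tight0 tight_w v_v0); lia.
have core_free j : j < t -> ~~ web_adj n k v0 (nth v0 path0 j).
  by move=> jt; rewrite web_adj_v0 nth_path0 //; lia.
have mem_p x : (x \in path0) = (x \notin Nclosed n k v0) by rewrite -in_setC -path0E inE.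
have state : tight_state n k v0 path0 0 t (Nopen n k v0) [:: v0].
  split; rewrite ?size_path0 ?mem_head ?in_Nopen ?web_adj_irr //; try lia.
  - by move=> j jt; rewrite in_Nopen; apply: core_free; lia.
  - by apply: core_free; lia.
  - by apply: core_free; lia.
split => //; rewrite -(mkseq_nth v0 path0) size_path0 /mkseq.
by have := tight_state_good mem_p path0_ok Nopen0_ends state tight_w uniq_w; rewrite subn0.
Qed.

Lemma legal_tight_good_config C s :
  legal n k C s -> size s = (n - 2 * k).+1 -> good_config C.
Proof.
case: s => [|x w] // legal_xw [size_w].
have le_xn : x <= n by apply: ltnW.
pose f := rot (n - x); pose g := rot x.
have fK : cancel f g := rotKV le_xn.
have gK : cancel g f := rotK le_xn.
have adj_f a b : web_adj n k (f a) (f b) = web_adj n k a b by rewrite web_adj_rot ?leq_subr.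
have adj_g a b : web_adj n k (g a) (g b) = web_adj n k a b by rewrite web_adj_rot.
have gv0 : g v0 = x := rot_v0 x.
have [||v0C path0_ok good0] := @legal_tight0 (f @: C) (map f w).
- by rewrite -[v0]gK gv0 -map_cons (legal_imset fK gK adj_f).
- by rewrite size_map size_w; lia.
exists x; split; first by rewrite -gv0 -(mem_imset_can fK gK).
exists (map g path0); split; [|split; [|split]].
- rewrite -gv0; exact: (compl_Nclosed_map gK fK adj_g path0E).
- exact: (induces_path_map gK adj_g path0_ok).
- by rewrite size_map size_path0.
- by rewrite -(imset_canK fK C); apply: (good_imset gK fK good0).
Qed.

End Web.

Unset Implicit Arguments.

Theorem proposition4 (n k : nat) (C : {set 'I_n}) :
  0 < k -> 2 * (k + 1) <= n ->
  let cond :=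
    C = [set: 'I_n] \/
    exists i : 'I_n, i \notin C /\
      exists p : seq 'I_n,
        [set x in p] = ~: Nclosed n k i /\
        induces_path_seq n k p /\
        size p = n - 2 * k - 1 /\
        good n C p in
  (cond -> gamma_gr n k C = m1 n k C) /\
  (~ cond -> gamma_gr n k C = m1 n k C - 1).
Proof.
move=> k_gt0 n_ge cond.
have le_m1 := gamma_gr_le (legal_size_le_m1 k_gt0 n_ge (C := C)).
have ge_n2k : n - 2 * k <= gamma_gr n k C.
  have := leq_gamma_gr_legal k_gt0 n_ge (legal_iota k_gt0 n_ge C).
  by rewrite size_map size_iota; apply; rewrite -size_eq0 size_map size_iota; lia.
have [CT|CT] := eqVneq C [set: 'I_n].
  rewrite CT m1_setT // in le_m1 *; split => [_|not_cond]; last by case: not_cond; left.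
  by apply/eqP; rewrite eqn_leq le_m1 -CT.
rewrite m1_proper //; split.
  case=> [/eqP|config]; first by rewrite (negbTE CT).
  have [s [legal_s size_s]] := good_config_legal k_gt0 n_ge config.
  apply/eqP; rewrite eqn_leq -(m1_proper k_gt0 n_ge CT) le_m1 /= m1_proper //.
  by rewrite -size_s leq_gamma_gr_legal // -size_eq0 size_s.
move=> not_cond; apply/eqP; rewrite subn1 /= eqn_leq ge_n2k andbT.
apply: gamma_gr_le => s legal_s; rewrite leqNgt; apply/negP => long_s.
have := legal_size_le_m1 k_gt0 n_ge legal_s; rewrite m1_proper // => short_s.
apply: not_cond; right; apply: (legal_tight_good_config k_gt0 n_ge legal_s); lia.
Qed.
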